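(* Let $r>0$, let $m$ be a hyperbolic line in $\mathbb{H}^2$, and let $H$ be one of the two connected components of the set of points at hyperbolic distance exactly $r$ from $m$ (a hypercycle with axis $m$). Let $b,b'$ be points on $m$ with $d(b,b')=\tanh r$, and let $a,a'\in H$ be the points such that the segments $ba$ and $b'a'$ are perpendicular to $m$. Let the box be the closed region bounded by the segments $ab$, $bb'$, $b'a'$ and the arc of $H$ between $a'$ and $a$. Then the box has hyperbolic diameter at most $2r$.
   Context: $\mathbb{H}^2$ is the hyperbolic plane of Gaussian curvature $-1$ with hyperbolic distance $d$. *)

(* hyperboloid model of the hyperbolic plane H^2 (curvature -1). *)
From Stdlib Require Import Reals.
Open Scope R_scope.

Record pt := Pt { c0 : R; c1 : R; c2 : R }.

Definition mink (x y : pt) : R := - c0 x * c0 y + c1 x * c1 y + c2 x * c2 y.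

Definition H2 (x : pt) : Prop := mink x x = -1 /\ 0 < c0 x.

Definition arcosh (t : R) : R := ln (t + sqrt (t * t - 1)).

Definition hdist (x y : pt) : R := arcosh (- mink x y).

(* Hyperbolic lines: intersections of H2 with timelike planes through 0,
   i.e. planes with a spacelike unit normal n (<n,n> = 1). *)
Definition unit_normal (n : pt) : Prop := mink n n = 1.
Definition line (n : pt) (x : pt) : Prop := H2 x /\ mink x n = 0.

Definition dist_to_set (x : pt) (A : pt -> Prop) (r : R) : Prop :=
  (forall y, A y -> r <= hdist x y) /\
  (forall s, (forall y, A y -> s <= hdist x y) -> s <= r).

Definition equidist (n : pt) (r : R) (x : pt) : Prop :=
  H2 x /\ dist_to_set x (line n) r.

(* The two open half-planes bounded by the line with normal n are
   {<x,n> > 0} and {<x,n> < 0}; sg = 1 or -1 selects one of them.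
   The hypercycle is the part of the equidistant set on that side. *)
Definition hypercycle (n : pt) (r : R) (sg : R) (x : pt) : Prop :=
  equidist n r x /\ 0 < sg * mink x n.

(* Tangent vector at b pointing towards p (Minkowski projection of p
   onto the tangent plane b^perp). *)
Definition tangent_to (b p : pt) : pt :=
  Pt (c0 p + mink p b * c0 b) (c1 p + mink p b * c1 b) (c2 p + mink p b * c2 b).

Definition perp_at (n : pt) (b a : pt) : Prop :=
  line n b /\ H2 a /\ a <> b /\
  forall p, line n p -> mink (tangent_to b a) (tangent_to b p) = 0.

Definition seg (p q : pt) (x : pt) : Prop :=
  H2 x /\ hdist p x + hdist x q = hdist p q.

(* The box: closed region bounded by [a,b], [b,b'], [b',a'] and the arc of
   the hypercycle from a' to a; it is the union of the perpendicular segments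
   from points p of [b,b'] to the hypercycle. *)
Definition box (n : pt) (r sg : R) (b b' : pt) (x : pt) : Prop :=
  exists p q, seg b b' p /\ hypercycle n r sg q /\ perp_at n p q /\ seg p q x.

(* Work in the hyperboloid model and in Fermi coordinates about the axis [m]
   (unit normal [n]): the perpendicular from [p] on [m] to the hypercycle is
   [s |-> cosh s * p + sg * sinh s * n], so every point of the box has the form
   [x = cosh s * p + sg * sinh s * n] with [p] in [[b, b']] and [0 <= s <= r].
   For two such points
     cosh d(x, y) = cosh s cosh s' cosh d(p, p') - sinh s sinh s'
                  = cosh (s - s') + cosh s cosh s' (cosh d(p, p') - 1),
   and since [d(p, p') <= tanh r < 1], [cosh d(p, p') - 1 <= 3/2 tanh^2 r], whence
     cosh d(x, y) <= cosh r + 3/2 sinh^2 r <= cosh^2 r + sinh^2 r = cosh (2 r). *)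

From Pilot Require Import Defs.
From Stdlib Require Import Reals Lra Psatz.
(* [Reals] exports its own [c1]; re-import the coordinate projections. *)
Import Pilot.Defs.
Open Scope R_scope.

Definition lin (a : R) (x : pt) (b : R) (y : pt) : pt :=
  Pt (a * c0 x + b * c0 y) (a * c1 x + b * c1 y) (a * c2 x + b * c2 y).

Lemma pt_ext x y : c0 x = c0 y -> c1 x = c1 y -> c2 x = c2 y -> x = y.
Proof. destruct x, y; simpl; intros; subst; reflexivity. Qed.

Lemma mink_sym x y : mink x y = mink y x.
Proof. unfold mink; ring. Qed.

Lemma mink_lin_l a x b y z : mink (lin a x b y) z = a * mink x z + b * mink y z.
Proof. unfold mink, lin; simpl; ring. Qed.

Lemma mink_lin_r a x b y z : mink z (lin a x b y) = a * mink z x + b * mink z y.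
Proof. unfold mink, lin; simpl; ring. Qed.

Lemma sign_sq sg : sg = 1 \/ sg = -1 -> sg * sg = 1.
Proof. intros [-> | ->]; ring. Qed.

Lemma H2_mink_le x y : H2 x -> H2 y -> mink x y <= -1.
Proof.
  destruct x as [x0 x1 x2], y as [y0 y1 y2]; unfold H2, mink; simpl.
  intros [Hx Px] [Hy Py].
  assert (CS : (x1*y1 + x2*y2)^2 <= (x0*x0 - 1) * (y0*y0 - 1)).
  { replace (x0*x0 - 1) with (x1*x1 + x2*x2) by lra.
    replace (y0*y0 - 1) with (y1*y1 + y2*y2) by lra.
    pose proof (pow2_ge_0 (x1*y2 - x2*y1)); nra. }
  assert (AM : (x0*x0 - 1) * (y0*y0 - 1) <= (x0*y0 - 1)^2).
  { pose proof (pow2_ge_0 (x0 - y0)); nra. }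
  assert (1 <= x0*y0) by nra.
  nra.
Qed.

Lemma H2_of_mink_neg x p : mink x x = -1 -> H2 p -> mink x p < 0 -> H2 x.
Proof.
  intros Hx Hp Hxp; split; [exact Hx|].
  destruct x as [x0 x1 x2], p as [p0 p1 p2]; unfold H2, mink in *; simpl in *.
  destruct Hp as [Hp Pp].
  assert (CS : (x1*p1 + x2*p2)^2 <= (x0*x0 - 1) * (p0*p0 - 1)).
  { replace (x0*x0 - 1) with (x1*x1 + x2*x2) by lra.
    replace (p0*p0 - 1) with (p1*p1 + p2*p2) by lra.
    pose proof (pow2_ge_0 (x1*p2 - x2*p1)); nra. }
  destruct (Rlt_le_dec 0 x0) as [|Nx]; [assumption|exfalso].
  assert (x0*p0 <= 0) by nra.
  assert (1 <= x0*x0) by nra.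
  nra.
Qed.

Lemma null_orth_timelike x v :
  mink x x < 0 -> mink v v = 0 -> mink v x = 0 -> v = Pt 0 0 0.
Proof.
  destruct x as [x0 x1 x2], v as [v0 v1 v2]; unfold mink; simpl.
  intros Hx Hv Hvx.
  assert (CS : (x0*v0)^2 <= (x1*x1 + x2*x2) * (v0*v0)).
  { replace (x0*v0) with (x1*v1 + x2*v2) by lra.
    replace (v0*v0) with (v1*v1 + v2*v2) by lra.
    pose proof (pow2_ge_0 (x1*v2 - x2*v1)); nra. }
  assert (Q : (x0*x0 - (x1*x1 + x2*x2)) * (v0*v0) <= 0) by nra.
  assert (V0 : v0 = 0).
  { assert (v0*v0 <= 0).
    { apply (Rmult_le_reg_l (x0*x0 - (x1*x1 + x2*x2))); lra. }
    nra. }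
  subst v0.
  assert (v1 = 0) by nra. assert (v2 = 0) by nra.
  subst; reflexivity.
Qed.

Lemma H2_eq_of_mink x z :
  mink x x = -1 -> mink z z = -1 -> mink x z = -1 -> x = z.
Proof.
  intros Hx Hz Hxz.
  assert (Hzx : mink z x = -1) by (rewrite mink_sym; exact Hxz).
  assert (E : lin 1 x (-1) z = Pt 0 0 0).
  { apply (null_orth_timelike x); [lra| |].
    - rewrite mink_lin_l, !mink_lin_r, Hx, Hz, Hxz, Hzx; ring.
    - rewrite mink_lin_l, Hx, Hzx; ring. }
  unfold lin in E; injection E; intros; apply pt_ext; lra.
Qed.

Definition det3 (e f g : pt) : R :=
  c0 e * (c1 f * c2 g - c2 f * c1 g) - c1 e * (c0 f * c2 g - c2 f * c0 g)
  + c2 e * (c0 f * c1 g - c1 f * c0 g).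

(* [det (Gram e f g) = det (diag (-1, 1, 1)) * det3 e f g ^ 2]. *)
Lemma gram_det3 e f g :
  mink e e * (mink f f * mink g g - mink f g ^ 2)
  - mink e f * (mink e f * mink g g - mink f g * mink e g)
  + mink e g * (mink e f * mink f g - mink f f * mink e g) = - det3 e f g ^ 2.
Proof. destruct e, f, g; unfold mink, det3; simpl; ring. Qed.

Definition crs (p n : pt) : pt :=
  Pt (c2 p * c1 n - c1 p * c2 n) (c2 p * c0 n - c0 p * c2 n) (c0 p * c1 n - c1 p * c0 n).

Lemma mink_crs p n v : mink (crs p n) v = det3 p n v.
Proof. destruct p, n, v; unfold mink, det3, crs; simpl; ring. Qed.

Lemma mink_crs_crs p n :
  mink (crs p n) (crs p n) = mink p n ^ 2 - mink p p * mink n n.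
Proof. destruct p, n; unfold mink, crs; simpl; ring. Qed.

Lemma orth_crs_decomp p n q :
  mink p p = -1 -> mink n n = 1 -> mink p n = 0 -> mink (crs p n) q = 0 ->
  q = lin (- mink q p) p (mink q n) n.
Proof.
  intros Hp Hn Hpn Hqu.
  set (w := lin 1 q (-1) (lin (- mink q p) p (mink q n) n)).
  assert (Hwp : mink w p = 0).
  { unfold w. rewrite !mink_lin_l, Hp, (mink_sym n p), Hpn. ring. }
  assert (Hwn : mink w n = 0).
  { unfold w. rewrite !mink_lin_l, Hn, Hpn. ring. }
  assert (Hwu : det3 p n w = 0).
  { rewrite <- mink_crs. unfold w. rewrite !mink_lin_r, Hqu, !mink_crs.
    unfold det3. ring. }
  pose proof (gram_det3 p n w) as G.
  rewrite Hp, Hn, Hpn, Hwu, (mink_sym p w), (mink_sym n w), Hwp, Hwn in G.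
  assert (W : w = Pt 0 0 0) by (apply (null_orth_timelike p); lra).
  unfold w, lin in W; simpl in W; injection W; intros.
  apply pt_ext; simpl; lra.
Qed.

Lemma cosh_sinh_sq t : cosh t * cosh t - sinh t * sinh t = 1.
Proof.
  unfold cosh, sinh. rewrite exp_Ropp. pose proof (exp_pos t). field. lra.
Qed.

Lemma cosh_plus x y : cosh (x + y) = cosh x * cosh y + sinh x * sinh y.
Proof.
  unfold cosh, sinh. rewrite Ropp_plus_distr, !exp_plus, !exp_Ropp.
  pose proof (exp_pos x); pose proof (exp_pos y). field. lra.
Qed.

Lemma cosh_minus x y : cosh (x - y) = cosh x * cosh y - sinh x * sinh y.
Proof.
  unfold Rminus. rewrite cosh_plus. unfold cosh, sinh. rewrite Ropp_involutive. field.
Qed.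

Lemma cosh_opp t : cosh (- t) = cosh t.
Proof. unfold cosh. rewrite Ropp_involutive. field. Qed.

Lemma sinh_pos t : 0 < t -> 0 < sinh t.
Proof. intros H. pose proof (sinh_lt 0 t H). rewrite sinh_0 in *. lra. Qed.

Lemma sinh_nonneg t : 0 <= t -> 0 <= sinh t.
Proof.
  intros [H | <-]; [left; apply sinh_pos; exact H | rewrite sinh_0; lra].
Qed.

Lemma cosh_ge1 t : 1 <= cosh t.
Proof.
  pose proof (cosh_sinh_sq t). unfold cosh in *.
  pose proof (exp_pos t); pose proof (exp_pos (- t)). nra.
Qed.

Lemma cosh_le s t : 0 <= s -> s <= t -> cosh s <= cosh t.
Proof.
  intros Hs Hst.
  replace t with (s + (t - s)) by ring. rewrite cosh_plus.
  pose proof (cosh_ge1 (t - s)); pose proof (cosh_ge1 s).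
  pose proof (sinh_nonneg s Hs); pose proof (sinh_nonneg (t - s) ltac:(lra)).
  nra.
Qed.

Lemma cosh_le_abs s t : Rabs s <= t -> cosh s <= cosh t.
Proof.
  intros H. destruct (Rle_dec 0 s).
  - rewrite Rabs_right in H by lra. apply cosh_le; lra.
  - rewrite Rabs_left in H by lra. rewrite <- cosh_opp. apply cosh_le; lra.
Qed.

(* [cosh w - 1 = exp w (1 - exp (- w))^2 / 2], with [1 - exp (- w) <= w] and [exp w <= e <= 3]. *)
Lemma cosh_sub1_le w : 0 <= w <= 1 -> cosh w - 1 <= 3 / 2 * w ^ 2.
Proof.
  intros Hw.
  assert (E3 : exp w <= 3).
  { destruct (Req_dec w 1) as [->|]; [apply exp_le_3|].
    pose proof (exp_increasing w 1 ltac:(lra)); pose proof exp_le_3; lra. }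
  assert (Inv : exp w * exp (- w) = 1) by (rewrite <- exp_plus, Rplus_opp_r; apply exp_0).
  assert (E : cosh w - 1 = exp w * (1 - exp (- w)) ^ 2 / 2).
  { unfold cosh. replace (exp w * (1 - exp (- w)) ^ 2)
      with (exp w - 2 * (exp w * exp (- w)) + exp w * exp (- w) * exp (- w)) by ring.
    rewrite Inv. lra. }
  assert (Lo : 1 - exp (- w) <= w) by (pose proof (exp_ineq1_le (- w)); lra).
  assert (Hi : 0 <= 1 - exp (- w)).
  { destruct (proj1 Hw) as [Hp | <-]; [|rewrite Ropp_0, exp_0; lra].
    pose proof (exp_increasing (- w) 0 ltac:(lra)). rewrite exp_0 in *. lra. }
  rewrite E. pose proof (exp_pos w).
  assert ((1 - exp (- w)) ^ 2 <= w ^ 2) by (apply pow_incr; lra).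
  pose proof (pow2_ge_0 (1 - exp (- w))). nra.
Qed.

Lemma tanh_bounds r : 0 < r -> 0 < tanh r < 1.
Proof.
  intros Hr. unfold tanh. pose proof (sinh_pos r Hr). pose proof (cosh_ge1 r).
  assert (sinh r < cosh r) by (unfold sinh, cosh; pose proof (exp_pos (- r)); lra).
  split; [apply Rdiv_lt_0_compat; lra|].
  apply (Rmult_lt_reg_r (cosh r)); [lra|].
  unfold Rdiv. rewrite Rmult_assoc, Rinv_l; lra.
Qed.

Lemma arcosh_spec c : 1 <= c -> cosh (arcosh c) = c /\ sinh (arcosh c) = sqrt (c * c - 1).
Proof.
  intros H. pose proof (sqrt_pos (c * c - 1)).
  assert (Hs : sqrt (c * c - 1) * sqrt (c * c - 1) = c * c - 1) by (apply sqrt_sqrt; nra).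
  assert (Ex : exp (arcosh c) = c + sqrt (c * c - 1)) by (apply exp_ln; lra).
  assert (Inv : / (c + sqrt (c * c - 1)) = c - sqrt (c * c - 1)).
  { field_simplify_eq; [nra | lra]. }
  unfold cosh, sinh. rewrite exp_Ropp, Ex, Inv. split; field.
Qed.

Lemma cosh_arcosh c : 1 <= c -> cosh (arcosh c) = c.
Proof. intros H; apply (arcosh_spec c H). Qed.

Lemma sinh_arcosh c : 1 <= c -> sinh (arcosh c) = sqrt (c * c - 1).
Proof. intros H; apply (arcosh_spec c H). Qed.

Lemma arcosh_le c d : 1 <= c -> c <= d -> arcosh c <= arcosh d.
Proof.
  intros Hc Hcd. unfold arcosh.
  assert (sqrt (c * c - 1) <= sqrt (d * d - 1)) by (apply sqrt_le_1_alt; nra).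
  pose proof (sqrt_pos (c * c - 1)).
  destruct (Req_dec (c + sqrt (c * c - 1)) (d + sqrt (d * d - 1))) as [-> | Ne];
    [lra | left; apply ln_increasing; lra].
Qed.

Lemma arcosh_nonneg c : 1 <= c -> 0 <= arcosh c.
Proof.
  intros H. replace 0 with (arcosh 1); [apply arcosh_le; lra|].
  unfold arcosh. replace (1 * 1 - 1) with 0 by ring. rewrite sqrt_0, Rplus_0_r. apply ln_1.
Qed.

Lemma arcosh_cosh t : 0 <= t -> arcosh (cosh t) = t.
Proof.
  intros H. unfold arcosh.
  replace (cosh t * cosh t - 1) with (sinh t * sinh t) by (pose proof (cosh_sinh_sq t); lra).
  rewrite sqrt_square by (apply sinh_nonneg; lra).
  replace (cosh t + sinh t) with (exp t) by (unfold cosh, sinh; field).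
  apply ln_exp.
Qed.

Lemma hdist_sym x y : hdist x y = hdist y x.
Proof. unfold hdist. rewrite mink_sym. reflexivity. Qed.

Lemma cosh_hdist x y : H2 x -> H2 y -> cosh (hdist x y) = - mink x y.
Proof. intros Hx Hy. apply cosh_arcosh. pose proof (H2_mink_le x y Hx Hy). lra. Qed.

Lemma hdist_nonneg x y : H2 x -> H2 y -> 0 <= hdist x y.
Proof. intros Hx Hy. apply arcosh_nonneg. pose proof (H2_mink_le x y Hx Hy). lra. Qed.

Lemma hdist_le x y t : H2 x -> H2 y -> 0 <= t -> - mink x y <= cosh t -> hdist x y <= t.
Proof.
  intros Hx Hy Ht H. rewrite <- (arcosh_cosh t Ht).
  apply arcosh_le; [pose proof (H2_mink_le x y Hx Hy); lra | exact H].
Qed.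

Lemma hdist_triangle x y z : H2 x -> H2 y -> H2 z -> hdist x z <= hdist x y + hdist y z.
Proof.
  intros Hx Hy Hz.
  pose proof (gram_det3 y x z) as G.
  rewrite (proj1 Hx), (proj1 Hy), (proj1 Hz), (mink_sym y x) in G.
  set (a := - mink x y) in *. set (b := - mink y z) in *.
  assert (Ha : 1 <= a) by (unfold a; pose proof (H2_mink_le x y Hx Hy); lra).
  assert (Hb : 1 <= b) by (unfold b; pose proof (H2_mink_le y z Hy Hz); lra).
  assert (K : (- mink x z - a * b) ^ 2 <= (a * a - 1) * (b * b - 1)).
  { pose proof (pow2_ge_0 (det3 y x z)).
    replace (mink x y) with (- a) in G by (unfold a; ring).
    replace (mink y z) with (- b) in G by (unfold b; ring). nra. }
  assert (K' : - mink x z - a * b <= sqrt (a * a - 1) * sqrt (b * b - 1)).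
  { rewrite <- sqrt_mult by nra.
    apply (Rle_trans _ (Rabs (- mink x z - a * b))); [apply Rle_abs|].
    rewrite <- sqrt_Rsqr_abs. apply sqrt_le_1_alt. unfold Rsqr. lra. }
  apply hdist_le; [exact Hx | exact Hz | |].
  - pose proof (hdist_nonneg x y Hx Hy); pose proof (hdist_nonneg y z Hy Hz); lra.
  - unfold hdist. rewrite cosh_plus. fold a b.
    rewrite !cosh_arcosh, !sinh_arcosh by lra. lra.
Qed.

Lemma seg_hdist_le b b' p p' :
  H2 b -> H2 b' -> seg b b' p -> seg b b' p' -> hdist p p' <= hdist b b'.
Proof.
  intros Hb Hb' [Hp Ep] [Hp' Ep'].
  pose proof (hdist_triangle p b p' Hp Hb Hp').
  pose proof (hdist_triangle p b' p' Hp Hb' Hp').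
  rewrite (hdist_sym p b) in *. rewrite (hdist_sym b' p') in *. lra.
Qed.

Lemma cosh_box_bound r s s' X :
  0 <= s <= r -> 0 <= s' <= r -> 1 <= X -> X - 1 <= 3 / 2 * tanh r ^ 2 ->
  cosh s * cosh s' * X - sinh s * sinh s' <= cosh (2 * r).
Proof.
  intros Hs Hs' HX HX'.
  assert (Split : cosh s * cosh s' * X - sinh s * sinh s'
                  = cosh (s - s') + cosh s * cosh s' * (X - 1)) by (rewrite cosh_minus; ring).
  assert (Diff : cosh (s - s') <= cosh r) by (apply cosh_le_abs, Rabs_le; lra).
  assert (Prod : cosh s * cosh s' <= cosh r ^ 2).
  { pose proof (cosh_le s r (proj1 Hs) (proj2 Hs)).
    pose proof (cosh_le s' r (proj1 Hs') (proj2 Hs')).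
    pose proof (cosh_ge1 s); pose proof (cosh_ge1 s'). nra. }
  pose proof (cosh_ge1 r) as C1.
  assert (Tanh : cosh r ^ 2 * tanh r ^ 2 = sinh r ^ 2) by (unfold tanh; field; lra).
  assert (Double : cosh (2 * r) = cosh r ^ 2 + sinh r ^ 2)
    by (replace (2 * r) with (r + r) by ring; rewrite cosh_plus; ring).
  pose proof (cosh_sinh_sq r).
  pose proof (cosh_ge1 s); pose proof (cosh_ge1 s').
  assert (cosh s * cosh s' * (X - 1) <= cosh r ^ 2 * (3 / 2 * tanh r ^ 2)).
  { apply Rmult_le_compat; nra. }
  rewrite Split, Double. nra.
Qed.

Lemma mink_tangent_to b x y :
  mink b b = -1 ->
  mink (tangent_to b x) (tangent_to b y) = mink x y + mink x b * mink y b.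
Proof.
  intros Hb.
  assert (T : forall z, tangent_to b z = lin 1 z (mink z b) b)
    by (intros z; apply pt_ext; unfold tangent_to, lin; simpl; ring).
  rewrite !T, mink_lin_l, !mink_lin_r, Hb, (mink_sym b y). ring.
Qed.

(* [(5/4, 3/4) = (cosh, sinh) (ln 2)]: the point of the line at distance [ln 2] from [p]. *)
Lemma line_crs_point n p :
  unit_normal n -> line n p -> line n (lin (5/4) p (3/4) (crs p n)).
Proof.
  intros Hn [Hp Hpn].
  assert (Up : mink (crs p n) p = 0) by (rewrite mink_crs; unfold det3; ring).
  assert (Un : mink (crs p n) n = 0) by (rewrite mink_crs; unfold det3; ring).
  assert (Uu : mink (crs p n) (crs p n) = 1).
  { rewrite mink_crs_crs, (proj1 Hp), Hpn. unfold unit_normal in Hn. rewrite Hn. ring. }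
  split; [apply (H2_of_mink_neg _ p); [|exact Hp|] |].
  - rewrite mink_lin_l, !mink_lin_r, (proj1 Hp), Uu, Up, (mink_sym p (crs p n)), Up. field.
  - rewrite mink_lin_l, (proj1 Hp), Up. lra.
  - rewrite mink_lin_l, Hpn, Un. ring.
Qed.

Lemma perp_at_decomp n p q :
  unit_normal n -> perp_at n p q -> q = lin (- mink q p) p (mink q n) n.
Proof.
  intros Hn [Lp [Hq [_ Hperp]]].
  pose proof (line_crs_point n p Hn Lp) as Lp'.
  destruct Lp as [Hp Hpn].
  assert (Up : mink (crs p n) p = 0) by (rewrite mink_crs; unfold det3; ring).
  specialize (Hperp _ Lp').
  rewrite mink_tangent_to, !mink_lin_r, mink_lin_l, (proj1 Hp), Up in Hperp by apply Hp.
  apply orth_crs_decomp; [apply Hp | exact Hn | exact Hpn |].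
  rewrite mink_sym. lra.
Qed.

Definition along_normal (n : pt) (sg : R) (p : pt) (s : R) : pt :=
  lin (cosh s) p (sg * sinh s) n.

Lemma mink_along_normal n sg p p' s s' :
  unit_normal n -> sg * sg = 1 -> mink p n = 0 -> mink p' n = 0 ->
  mink (along_normal n sg p s) (along_normal n sg p' s')
  = cosh s * cosh s' * mink p p' + sinh s * sinh s'.
Proof.
  unfold unit_normal, along_normal. intros Hn Hsg Hpn Hp'n.
  rewrite mink_lin_l, !mink_lin_r, Hpn, Hn, (mink_sym n p'), Hp'n.
  transitivity (cosh s * cosh s' * mink p p' + (sg * sg) * (sinh s * sinh s')); [ring|].
  rewrite Hsg. ring.
Qed.

Lemma hypercycle_perp n r sg p q :
  unit_normal n -> (sg = 1 \/ sg = -1) ->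
  perp_at n p q -> hypercycle n r sg q -> q = along_normal n sg p r.
Proof.
  intros Hn Hsg Hpq [[Hq [Hlow Hsup]] Hside].
  pose proof (perp_at_decomp n p q Hn Hpq) as E.
  destruct Hpq as [[Hp Hpn] _].
  set (a := - mink q p) in *. set (b := mink q n) in *.
  assert (Ga : 1 <= a) by (unfold a; pose proof (H2_mink_le q p Hq Hp); lra).
  assert (Foot : forall y, line n y -> a <= - mink q y).
  { intros y [Hy Hyn]. rewrite E, mink_lin_l, (mink_sym n y), Hyn.
    pose proof (H2_mink_le p y Hp Hy). nra. }
  assert (Ar : arcosh a = r).
  { apply Rle_antisym.
    - apply Hsup. intros y Ly. apply arcosh_le; [lra | apply Foot, Ly].
    - exact (Hlow p (conj Hp Hpn)). }
  assert (Ca : a = cosh r) by (rewrite <- Ar, cosh_arcosh; lra).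
  assert (Bsq : b * b = sinh r * sinh r).
  { pose proof (proj1 Hq) as Qq. rewrite E, mink_lin_l, !mink_lin_r, (proj1 Hp), Hpn,
      (mink_sym n p), Hpn in Qq.
    unfold unit_normal in Hn. rewrite Hn in Qq.
    pose proof (cosh_sinh_sq r). rewrite Ca in Qq. nra. }
  rewrite E. unfold along_normal. rewrite <- Ca. f_equal.
  assert (0 <= sinh r) by (apply sinh_nonneg; rewrite <- Ar; apply arcosh_nonneg; lra).
  destruct Hsg as [-> | ->]; nra.
Qed.

Lemma H2_along_normal n sg p s :
  unit_normal n -> (sg = 1 \/ sg = -1) -> line n p -> H2 (along_normal n sg p s).
Proof.
  intros Hn Hsg [Hp Hpn].
  apply (H2_of_mink_neg _ p); [|exact Hp|].
  - rewrite (mink_along_normal n sg p p s s Hn (sign_sq sg Hsg) Hpn Hpn), (proj1 Hp).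
    pose proof (cosh_sinh_sq s). lra.
  - unfold along_normal. rewrite mink_lin_l, (proj1 Hp), (mink_sym n p), Hpn.
    pose proof (cosh_ge1 s). lra.
Qed.

Lemma seg_along_normal n r sg p x :
  0 < r -> unit_normal n -> (sg = 1 \/ sg = -1) -> line n p ->
  seg p (along_normal n sg p r) x -> exists s, 0 <= s <= r /\ x = along_normal n sg p s.
Proof.
  intros Hr Hn Hsg Lp [Hx Hs].
  pose proof (H2_along_normal n sg p r Hn Hsg Lp) as Hq.
  set (q := along_normal n sg p r) in *.
  destruct Lp as [Hp Hpn].
  assert (Dpq : hdist p q = r).
  { unfold hdist, q, along_normal. rewrite mink_lin_r, (proj1 Hp), Hpn.
    replace (- (cosh r * -1 + sg * sinh r * 0)) with (cosh r) by ring.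
    apply arcosh_cosh; lra. }
  pose proof (hdist_nonneg p x Hp Hx) as S0.
  set (s := hdist p x) in *.
  pose proof (hdist_nonneg x q Hx Hq) as T0.
  assert (Cs : cosh s = - mink x p) by (unfold s; rewrite cosh_hdist, mink_sym; auto).
  assert (Ct : cosh (r - s) = - mink x q).
  { replace (r - s) with (hdist x q) by lra. apply cosh_hdist; assumption. }
  unfold q, along_normal in Ct.
  rewrite cosh_minus, mink_lin_r in Ct.
  replace (mink x p) with (- cosh s) in Ct by lra.
  pose proof (sign_sq sg Hsg) as Sg2.
  (* Equality in the triangle inequality pins down [<x, n>]. *)
  assert (Xn : mink x n = sg * sinh s).
  { pose proof (sinh_pos r Hr).
    assert (sinh r * (sg * mink x n - sinh s) = 0) by lra.
    assert (sg * mink x n = sinh s) by nra.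
    transitivity (sg * (sg * mink x n)); [rewrite <- Rmult_assoc, Sg2; ring | congruence]. }
  exists s. split; [split; lra|].
  apply H2_eq_of_mink; [apply Hx | apply (H2_along_normal n sg p s Hn Hsg (conj Hp Hpn)) |].
  unfold along_normal. rewrite mink_lin_r, Xn, <- (Ropp_involutive (mink x p)), <- Cs.
  pose proof (cosh_sinh_sq s).
  transitivity (- (cosh s * cosh s) + sg * sg * (sinh s * sinh s)); [ring|].
  rewrite Sg2. lra.
Qed.

Theorem lemma8 (r : R) (n : pt) (sg : R) (b b' a a' : pt) :
  0 < r ->
  unit_normal n ->
  (sg = 1 \/ sg = -1) ->
  line n b -> line n b' ->
  hdist b b' = tanh r ->
  hypercycle n r sg a -> hypercycle n r sg a' ->
  perp_at n b a -> perp_at n b' a' ->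
  forall x y, box n r sg b b' x -> box n r sg b b' y -> hdist x y <= 2 * r.
Proof.
  intros Hr Hn Hsg [Hb _] [Hb' _] Hbb' _ _ _ _ x y
    [p [q [Sp [Hq [Ppq Sx]]]]] [p' [q' [Sp' [Hq' [Ppq' Sy]]]]].
  pose proof (proj1 Ppq) as Lp; pose proof (proj1 Ppq') as Lp'.
  rewrite (hypercycle_perp n r sg p q Hn Hsg Ppq Hq) in Sx.
  rewrite (hypercycle_perp n r sg p' q' Hn Hsg Ppq' Hq') in Sy.
  destruct (seg_along_normal n r sg p x Hr Hn Hsg Lp Sx) as [s [Hs ->]].
  destruct (seg_along_normal n r sg p' y Hr Hn Hsg Lp' Sy) as [s' [Hs' ->]].
  destruct Lp as [Hp Hpn], Lp' as [Hp' Hp'n].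
  pose proof (tanh_bounds r Hr) as T.
  assert (Near : hdist p p' <= tanh r) by (rewrite <- Hbb'; apply seg_hdist_le; assumption).
  assert (X1 : - mink p p' - 1 <= 3 / 2 * tanh r ^ 2).
  { rewrite <- (cosh_hdist p p' Hp Hp').
    pose proof (cosh_le _ _ (hdist_nonneg p p' Hp Hp') Near).
    pose proof (cosh_sub1_le (tanh r) ltac:(lra)). lra. }
  apply hdist_le; [apply Sx | apply Sy | lra |].
  rewrite (mink_along_normal n sg p p' s s' Hn (sign_sq sg Hsg) Hpn Hp'n).
  pose proof (H2_mink_le p p' Hp Hp').
  pose proof (cosh_box_bound r s s' (- mink p p') Hs Hs' ltac:(lra) X1). lra.
Qed.
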